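(* Let $X\in\mathrm{M}(n,q)$, let $c_X(t)=\prod_h h^{\nu(h)}$ be its characteristic polynomial factored over monic irreducibles $h$, and let $v\in V=\mathbb{F}_q^{1\times n}$ be non-zero. Run the procedure IsfWitness$(v,X,c_X)$ described below. Then: (1) the procedure terminates by returning at one of the two return statements inside the while loop, and the loop condition is tested at most $\lfloor\log_2 n\rfloor+2$ times; (2) it returns $(\textsc{True},u,a)$ if and only if $v$ is an $a'$-witness for $X$ for some non-constant monic divisor $a'$ of $c_X(t)$; in that case $u\neq0$, $a=\mathrm{ord}_X(u)$ is non-constant, $\gcd(a,c_X/a)=1$, and $u\,\mathbb{F}_q[X]=\bigoplus_{h\mid a}V(h)\subseteq v\,\mathbb{F}_q[X]$, so that $v$ is an $a$-witness for $X$; (3) it returns False if and only if $o_h(\mathrm{ord}_X(v))<\nu(h)$ for every monic irreducible $h$ dividing $c_X$ such that $X$ is $f$-cyclic relative to $h$; in particular it returns False whenever $X$ is uncyclic.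
   Context: $\mathrm{M}(n,q)$ is the algebra of $n\times n$ matrices over $\mathbb{F}_q$; $V=\mathbb{F}_q^{1\times n}$ is an $\mathbb{F}_q[t]$-module with $t$ acting as $X$. For monic irreducible $h$, $V(h)=\ker h(X)^n$ is the $h$-primary component; $X$ is $f$-cyclic relative to $h$ if $V(h)$ is a cyclic $\mathbb{F}_q[X]$-module, and $X$ is uncyclic if it is $f$-cyclic relative to no irreducible divisor of $c_X$. For $w\in V$, $\mathrm{ord}_X(w)$ is the monic polynomial $a$ of least degree with $w\,a(X)=0$. For a non-zero polynomial $a$ and monic irreducible $h$, $o_h(a)$ is the largest $k$ with $h^k\mid a$. For a non-constant monic divisor $a$ of $c_X$, a vector $w$ is an $a$-witness for $X$ if $V(h)\subseteq w\,\mathbb{F}_q[X]$ for every monic irreducible divisor $h$ of $a$. All gcd's are monic. Procedure IsfWitness$(v,X,c_X)$: set $u:=v$, $g:=1$, $a:=\mathrm{ord}_X(u)$, $d:=\gcd(a,c_X/a)$, $i:=1$. While $i\leq\lfloor\log_2 n\rfloor+2$: if $d=1$ return $(\textsc{True},u,a)$; if $d=a$ return False; otherwise set $g:=g\cdot d$, $u:=v\,g(X)$, $a:=a/d$, $e:=\gcd(a,d)$, $d:=e\cdot\gcd(a/e,e)$, $i:=i+1$. *)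

From HB Require Import structures.
From mathcomp Require Import all_boot all_order all_algebra all_field.
From Stdlib Require Import ClassicalEpsilon.
Set Implicit Arguments. Unset Strict Implicit. Unset Printing Implicit Defensive.
Import GRing.Theory.
Local Open Scope ring_scope.

Section Defs.
Variables (F : finFieldType) (n : nat).
(* Dimension is n.+1 (so that horner_mx applies); V = 'rV[F]_n.+1, and
   t acts on V as right multiplication by X. *)
Implicit Types (X : 'M[F]_n.+1) (v w u x : 'rV[F]_n.+1) (p a h : {poly F}).

Definition pact X w p : 'rV[F]_n.+1 := w *m horner_mx X p.

Definition mgcd p a : {poly F} := (lead_coef (gcdp p a))^-1 *: gcdp p a.

Definition is_ord X w a : Prop :=
  [/\ a \is monic, pact X w a = 0 &
      forall b : {poly F}, b \is monic -> pact X w b = 0 -> (size a <= size b)%N].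
Definition ordX X w : {poly F} := epsilon (inhabits 1) (is_ord X w).

(* o_h(a): largest k with h^k | a (for a <> 0 and h non-constant) *)
Definition oh h a : nat := \max_(k < size a | h ^+ k %| a) k.

Definition monic_irr h : Prop := h \is monic /\ irreducible_poly h.

Definition Vh X h : 'M[F]_n.+1 := kermx (horner_mx X (h ^+ n.+1)).

Definition in_cyc X w x : Prop := exists p, x = pact X w p.

Definition fcyclic X h : Prop :=
  exists w, (w <= Vh X h)%MS /\ forall x, (x <= Vh X h)%MS -> in_cyc X w x.

Definition uncyclic X : Prop :=
  forall h, monic_irr h -> h %| char_poly X -> ~ fcyclic X h.

Definition witness X w a : Prop :=
  forall h, monic_irr h -> h %| a ->
    forall x, (x <= Vh X h)%MS -> in_cyc X w x.

Definition in_prim_sum X a x : Prop :=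
  exists s : seq ({poly F} * 'rV[F]_n.+1),
    (forall hy, hy \in s -> monic_irr hy.1 /\ hy.1 %| a /\ (hy.2 <= Vh X hy.1)%MS)
    /\ x = \sum_(hy <- s) hy.2.

(* outcome of the procedure; the nat is the value of i (= number of times the
   loop condition has been tested) at the moment of return *)
Inductive outcome :=
  | RetTrue of 'rV[F]_n.+1 & {poly F} & nat
  | RetFalse of nat
  | NoReturn. (* loop condition failed: fell through the while loop *)

(* the while loop; [fuel] = number of remaining admissible iterations *)
Fixpoint isf_loop X v (fuel i : nat) (u : 'rV[F]_n.+1) (g a d : {poly F}) : outcome :=
  match fuel with
  | 0 => NoReturn
  | fuel'.+1 =>
      if d == 1 then RetTrue u a i
      else if d == a then RetFalse i
      else
        let g' := g * d in
        let u' := pact X v g' in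
        let a' := a %/ d in
        let e := mgcd a' d in
        let d' := e * mgcd (a' %/ e) e in
        isf_loop X v fuel' i.+1 u' g' a' d'
  end.

Definition loop_bound : nat := (trunc_log 2 n.+1 + 2)%N.

Definition IsfWitness v X (cX : {poly F}) : outcome :=
  let a := ordX X v in
  isf_loop X v loop_bound 1 v 1 a (mgcd a (cX %/ a)).

End Defs.

From HB Require Import structures.
From mathcomp Require Import all_boot all_order all_algebra all_field.
From mathcomp Require Import zify.
From Stdlib Require Import Classical ClassicalEpsilon Wf_nat Lia.
Set Implicit Arguments. Unset Strict Implicit. Unset Printing Implicit Defensive.
Import GRing.Theory.
Local Open Scope ring_scope.

(* Everything is decided one monic irreducible h at a time.  Put
   alpha = o_h(ord v) and nu = o_h(c_X).  The primary component V(h) has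
   dimension deg h * nu, while the h-part of v F[X] is cyclic of dimension
   deg h * alpha, so V(h) lies in v F[X] exactly when alpha = nu; call h
   saturated when moreover nu > 0.  All polynomials of the procedure divide
   ord v, and one pass through the loop transforms (o_h(a), o_h(d)) by a fixed
   rule, starting from (alpha, min(alpha, nu - alpha)).  A saturated h stays at
   (nu, 0).  For the other h, o_h(d) stays positive as long as o_h(a) is, and
   doubles until it catches up with o_h(a), after which both vanish; this takes
   at most log2 n + 1 passes.  Hence the loop stops with d = 1 exactly when some
   h is saturated, and then a is the product of the h^nu over saturated h and
   u = v (ord v / a) generates the sum of the corresponding V(h). *)

(** * Multiplicities of irreducible factors *)

Section Multiplicity.
Variable F : finFieldType.
Implicit Types p q r g h : {poly F}.

Lemma monic_irr_size h : monic_irr h -> (1 < size h)%N.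
Proof. by case=> _ []. Qed.

Lemma monic_irr_neq0 h : monic_irr h -> h != 0.
Proof. by move=> /monic_irr_size h1; rewrite -size_poly_gt0 ltnW. Qed.

Lemma monic_irr_dvdp_eq g h : monic_irr g -> monic_irr h -> g %| h -> g = h.
Proof.
move=> [gm [g1 _]] [hm hirr] gh; apply/eqP; rewrite -eqp_monic //.
by apply: hirr gh; rewrite neq_ltn g1 orbT.
Qed.

Lemma monic_irr_factor p : (1 < size p)%N -> exists2 h, monic_irr h & h %| p.
Proof.
elim: {p}(size p) {-2}p (leqnn (size p)) => [|k IHk] p pk p1.
  by have := leq_trans p1 pk.
have p0 : p != 0 by rewrite -size_poly_gt0 ltnW.
have [pirr | pred_p] := classic (irreducible_poly p).
  have lp0 : (lead_coef p)^-1 != 0 by rewrite invr_eq0 lead_coef_eq0.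
  exists ((lead_coef p)^-1 *: p); last by rewrite dvdpZl.
  split; first by rewrite monicE lead_coefZ mulVf // lead_coef_eq0.
  split=> [|q q1]; first by rewrite size_scale.
  by rewrite dvdpZr // => /(pirr q q1) /eqp_trans; apply; rewrite eqp_sym eqp_scale.
have [q q1 /andP[qp nqp]] : exists2 q : {poly F}, size q != 1%N & (q %| p) && ~~ (q %= p).
  apply: NNPP => nq; apply: pred_p; split=> // q q1 qp.
  have [//|nqp] := boolP (q %= p).
  by exfalso; apply: nq; exists q; rewrite ?qp.
have q0 : q != 0 := dvdpN0 qp p0.
have qlt : (size q < size p)%N.
  by rewrite ltn_neqAle dvdp_leq // andbT dvdp_size_eqp.
have [|h hirr hq] := IHk q (leq_trans qlt pk).
  by rewrite ltn_neqAle eq_sym q1 size_poly_gt0.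
by exists h => //; apply: dvdp_trans hq qp.
Qed.

Lemma monic_size_le1 p : p \is monic -> (size p <= 1)%N -> p = 1.
Proof.
move=> pm p1; apply/eqP; rewrite -eqp_monic ?monic1 // -size_poly_eq1.
by rewrite eqn_leq p1 size_poly_gt0 monic_neq0.
Qed.

Lemma size_exp_gt h k : (1 < size h)%N -> (k < size (h ^+ k))%N.
Proof.
move=> h1; have h0 : h != 0 by rewrite -size_poly_gt0 ltnW.
rewrite -(prednK (_ : 0 < size (h ^+ k))%N) ?size_poly_gt0 ?expf_neq0 // size_exp ltnS.
by rewrite leq_pmull // -ltnS prednK // ltnW.
Qed.

Lemma mgcd_monic p q : p != 0 -> mgcd p q \is monic.
Proof.
move=> p0; have g0 : gcdp p q != 0 by rewrite gcdp_eq0 negb_and p0.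
by rewrite monicE /mgcd lead_coefZ mulVf // lead_coef_eq0.
Qed.

Lemma mgcd_dvdl p q : p != 0 -> mgcd p q %| p.
Proof.
move=> p0; have g0 : gcdp p q != 0 by rewrite gcdp_eq0 negb_and p0.
by rewrite /mgcd dvdpZl ?dvdp_gcdl // invr_eq0 lead_coef_eq0.
Qed.

Section NonConstant.
Variable h : {poly F}.
Hypothesis h1 : (1 < size h)%N.

Lemma dvdp_exp_oh p j : p != 0 -> (h ^+ j %| p) = (j <= oh h p)%N.
Proof.
move=> p0; apply/idP/idP => [hj|].
  have jp : (j < size p)%N := leq_trans (size_exp_gt j h1) (dvdp_leq p0 hj).
  exact: (leq_bigmax_cond (Ordinal jp)).
move=> jk; apply: dvdp_trans (dvdp_exp2l h jk) _.
rewrite /oh; elim/big_ind: _ => [|x y hx hy|//]; first by rewrite expr0 dvd1p.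
by rewrite /maxn; case: ifP.
Qed.

Lemma oh_dvdp p : p != 0 -> h ^+ oh h p %| p.
Proof. by move=> p0; rewrite dvdp_exp_oh. Qed.

Lemma oh_lt_size p : p != 0 -> (oh h p < size p)%N.
Proof. by move=> p0; apply: leq_trans (size_exp_gt _ h1) (dvdp_leq p0 (oh_dvdp p0)). Qed.

Lemma oh_unique p k : p != 0 -> (forall j, (h ^+ j %| p) = (j <= k)%N) -> oh h p = k.
Proof.
move=> p0 hk; apply/eqP; rewrite eqn_leq -hk oh_dvdp //=.
by rewrite -dvdp_exp_oh // hk.
Qed.

Lemma oh_mulr_coprime r k : r != 0 -> coprimep h r -> oh h (r * h ^+ k) = k.
Proof.
move=> r0 hr; apply: oh_unique => [|j].
  by rewrite mulf_neq0 ?expf_neq0 // -size_poly_gt0 ltnW.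
by rewrite Gauss_dvdpr ?dvdp_Pexp2l // coprimep_expl.
Qed.

Lemma dvdp_oh_leq p q : q != 0 -> p %| q -> (oh h p <= oh h q)%N.
Proof. by move=> q0 pq; rewrite -dvdp_exp_oh // (dvdp_trans _ pq) ?oh_dvdp ?(dvdpN0 pq). Qed.

Lemma ohZ p c : c != 0 -> oh h (c *: p) = oh h p.
Proof.
have [-> | p0 c0] := eqVneq p 0; first by rewrite scaler0.
by apply: oh_unique => [|j]; rewrite ?scale_poly_eq0 ?negb_or ?c0 // dvdpZr // dvdp_exp_oh.
Qed.

Lemma oh_gcdp p q : p != 0 -> q != 0 -> oh h (gcdp p q) = minn (oh h p) (oh h q).
Proof.
move=> p0 q0; apply: oh_unique => [|j]; first by rewrite gcdp_eq0 negb_and p0.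
by rewrite dvdp_gcd !dvdp_exp_oh // leq_min.
Qed.

Lemma oh_mgcd p q : p != 0 -> q != 0 -> oh h (mgcd p q) = minn (oh h p) (oh h q).
Proof.
move=> p0 q0; have g0 : gcdp p q != 0 by rewrite gcdp_eq0 negb_and p0.
by rewrite /mgcd ohZ ?oh_gcdp // invr_eq0 lead_coef_eq0.
Qed.

End NonConstant.

Section Irreducible.
Variable h : {poly F}.
Hypothesis hirr : monic_irr h.
Let h1 := monic_irr_size hirr.

Lemma coprimep_oh_cofactor p : p != 0 -> coprimep h (p %/ h ^+ oh h p).
Proof.
move=> p0; rewrite irreducible_poly_coprime; last by case: hirr.
apply: contraNN (_ : ~~ (h ^+ (oh h p).+1 %| p)) => [/dvdpP[r Er]|].
  by rewrite -[X in _ %| X](divpK (oh_dvdp h1 p0)) Er exprS -mulrA dvdp_mull.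
by rewrite dvdp_exp_oh // ltnn.
Qed.

Lemma ohM p q : p != 0 -> q != 0 -> oh h (p * q) = (oh h p + oh h q)%N.
Proof.
move=> p0 q0; have dp := divpK (oh_dvdp h1 p0); have dq := divpK (oh_dvdp h1 q0).
have p'0 : p %/ h ^+ oh h p != 0 by apply: contraNneq p0 => e; rewrite -dp e mul0r.
have q'0 : q %/ h ^+ oh h q != 0 by apply: contraNneq q0 => e; rewrite -dq e mul0r.
rewrite -{1}dp -{1}dq mulrACA -exprD oh_mulr_coprime ?mulf_neq0 //.
by rewrite coprimepMr !coprimep_oh_cofactor.
Qed.

Lemma oh_divp p d : p != 0 -> d %| p -> oh h (p %/ d) = (oh h p - oh h d)%N.
Proof.
move=> p0 dp; have d0 := dvdpN0 dp p0; have E := divpK dp.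
have q0 : p %/ d != 0 by apply: contraNneq p0 => e; rewrite -E e mul0r.
by rewrite -{2}E ohM // addnK.
Qed.

Lemma oh_exp g k : monic_irr g -> oh h (g ^+ k) = if h == g then k else 0%N.
Proof.
move=> girr; rewrite -[g ^+ k]mul1r; have [<- | hg] := eqVneq h g.
  by rewrite oh_mulr_coprime ?oner_neq0 ?coprimep1.
rewrite -[_ * _]mulr1 -(expr0 h) oh_mulr_coprime ?mul1r ?expf_neq0 ?monic_irr_neq0 //.
rewrite coprimep_expr // irreducible_poly_coprime; last by case: hirr.
by apply: contra hg => /(monic_irr_dvdp_eq hirr girr) ->.
Qed.

Lemma oh1 : oh h 1 = 0%N.
Proof. by rewrite -(expr0 h) oh_exp // eqxx. Qed.

End Irreducible.

Lemma oh_leq_dvdp p q : p != 0 -> q != 0 ->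
  (forall h, monic_irr h -> (oh h p <= oh h q)%N) -> p %| q.
Proof.
elim: {p}(size p) {-2}p (leqnn (size p)) q => [|k IHk] p pk q p0 q0 pq.
  by move: pk; rewrite leqn0 size_poly_eq0 (negPf p0).
have [p1 | ] := ltnP 1 (size p); last first.
  rewrite leq_eqVlt ltnS leqn0 size_poly_eq0 (negPf p0) orbF => /size_poly1P[c c0 ->].
  by rewrite -alg_polyC dvdpZl ?dvd1p.
have [h hirr hp] := monic_irr_factor p1; have h1 := monic_irr_size hirr.
have hq : h %| q.
  by rewrite -(expr1 h) dvdp_exp_oh // (leq_trans _ (pq h hirr)) // -dvdp_exp_oh // expr1.
rewrite -(divpK hp) -(divpK hq) dvdp_mul2r ?monic_irr_neq0 //.
have p'0 : p %/ h != 0 by apply: contraNneq p0 => e; rewrite -(divpK hp) e mul0r.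
have q'0 : q %/ h != 0 by apply: contraNneq q0 => e; rewrite -(divpK hq) e mul0r.
apply: IHk => // [|g girr].
  rewrite size_divp ?monic_irr_neq0 //.
  by rewrite leq_subLR (leq_trans pk) // -add1n leq_add2r -subn1 subn_gt0.
by rewrite !oh_divp // ?leq_sub2r ?pq.
Qed.

Lemma monic_oh_inj p q : p \is monic -> q \is monic ->
  (forall h, monic_irr h -> oh h p = oh h q) -> p = q.
Proof.
move=> pm qm pq; apply/eqP; rewrite -eqp_monic //.
by apply/andP; split; apply: oh_leq_dvdp; rewrite ?monic_neq0 // => h /pq ->.
Qed.

Lemma monic_eq1_oh d : d \is monic -> (d = 1) <-> (forall h, monic_irr h -> oh h d = 0%N).
Proof.
move=> dm; split=> [-> h /oh1 //|d0].
by apply: monic_oh_inj; rewrite ?monic1 // => h hirr; rewrite d0 // oh1.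
Qed.

End Multiplicity.

(** * Annihilators of vectors *)

Section OrderPolynomial.
Variables (F : finFieldType) (n : nat) (X : 'M[F]_n.+1).
Implicit Types (p q : {poly F}) (w x y : 'rV[F]_n.+1).

Lemma pact1 w : pact X w 1 = w.
Proof. by rewrite /pact rmorph1 mulmx1. Qed.

Lemma pact0 w : pact X w 0 = 0.
Proof. by rewrite /pact rmorph0 mulmx0. Qed.

Lemma pact0v p : pact X 0 p = 0.
Proof. by rewrite /pact mul0mx. Qed.

Lemma pactD w p q : pact X w (p + q) = pact X w p + pact X w q.
Proof. by rewrite /pact rmorphD mulmxDr. Qed.

Lemma pactZ w c p : pact X w (c *: p) = c *: pact X w p.
Proof. by rewrite /pact linearZ /= scalemxAr. Qed.

Lemma pactM w p q : pact X w (p * q) = pact X (pact X w p) q.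
Proof. by rewrite /pact rmorphM /= -mulmxE mulmxA. Qed.

Lemma pact_char_poly w : pact X w (char_poly X) = 0.
Proof. by rewrite /pact Cayley_Hamilton mulmx0. Qed.

Lemma ordX_spec w : is_ord X w (ordX X w).
Proof.
apply: epsilon_spec.
pose P k := exists2 b, b \is monic /\ pact X w b = 0 & size b = k.
have inhP : exists k, P k.
  by exists (size (char_poly X)), (char_poly X); rewrite ?char_poly_monic ?pact_char_poly.
have := dec_inh_nat_subset_has_unique_least_element P (fun k => classic (P k)) inhP.
case=> k [[[b [bm bw] <-] bmin] _].
by exists b; split=> // b' b'm b'w; apply/leP/bmin; exists b'.
Qed.

Lemma ordX_monic w : ordX X w \is monic.
Proof. by case: (ordX_spec w). Qed.

Lemma ordX_neq0 w : ordX X w != 0.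
Proof. exact: monic_neq0 (ordX_monic w). Qed.

Lemma pact_ordX w : pact X w (ordX X w) = 0.
Proof. by case: (ordX_spec w). Qed.

Lemma pact_dvdp w p q : pact X w p = 0 -> p %| q -> pact X w q = 0.
Proof. by move=> wp /dvdpP[r ->]; rewrite mulrC pactM wp pact0v. Qed.

Lemma pact_modp w p : pact X w (p %% ordX X w) = pact X w p.
Proof. by rewrite {2}(divp_eq p (ordX X w)) pactD mulrC pactM pact_ordX pact0v add0r. Qed.

Lemma dvd_ordX w p : (ordX X w %| p) = (pact X w p == 0).
Proof.
apply/idP/eqP => [|wp]; first exact: pact_dvdp (pact_ordX w).
have [_ _ ordmin] := ordX_spec w; apply/modp_eq0P/eqP; apply: contraT => r0.
have lr0 : lead_coef (p %% ordX X w) != 0 by rewrite lead_coef_eq0.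
have := ordmin ((lead_coef (p %% ordX X w))^-1 *: (p %% ordX X w)).
rewrite monicE lead_coefZ mulVf // eqxx pactZ pact_modp wp scaler0 => /(_ isT erefl).
by rewrite size_scale ?invr_eq0 // leqNgt ltn_modp ordX_neq0.
Qed.

Lemma ordX_unique w a : a \is monic -> (forall p, (a %| p) = (pact X w p == 0)) ->
  ordX X w = a.
Proof.
move=> am wa; apply/eqP; rewrite -eqp_monic ?ordX_monic //.
by rewrite /eqp dvd_ordX -wa dvdpp wa -dvd_ordX dvdpp.
Qed.

Lemma ordX_pact w g : g \is monic -> g %| ordX X w -> ordX X (pact X w g) = ordX X w %/ g.
Proof.
move=> gm gw; have E := divpK gw; apply: ordX_unique => [|p].
  by rewrite -(monicMr _ gm) E ordX_monic.
by rewrite -pactM -dvd_ordX -{2}E [g * p]mulrC dvdp_mul2r ?monic_neq0.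
Qed.

Lemma ordX0 : ordX X 0 = 1.
Proof. by apply: ordX_unique; rewrite ?monic1 // => p; rewrite dvd1p pact0v eqxx. Qed.

Lemma ordX_dvdp_char_poly w : ordX X w %| char_poly X.
Proof. by rewrite dvd_ordX pact_char_poly. Qed.

Lemma in_cyc_pact w p : in_cyc X w (pact X w p).
Proof. by exists p. Qed.

Lemma in_cyc_trans w y x : in_cyc X w y -> in_cyc X y x -> in_cyc X w x.
Proof. by move=> [p ->] [q ->]; exists (p * q); rewrite pactM. Qed.

Lemma ordX_in_cyc w x : in_cyc X w x -> ordX X x %| ordX X w.
Proof. by case=> p ->; rewrite dvd_ordX -pactM mulrC pactM pact_ordX pact0v. Qed.

Lemma in_cycD w x y : in_cyc X w x -> in_cyc X w y -> in_cyc X w (x + y).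
Proof. by move=> [p ->] [q ->]; exists (p + q); rewrite pactD. Qed.

Lemma in_cyc0 w : in_cyc X w 0.
Proof. by exists 0; rewrite pact0. Qed.

End OrderPolynomial.

(** * Coprime splittings of the characteristic polynomial *)

Section CharPoly.
Variable F : fieldType.

Lemma char_poly_block_diag r s (A : 'M[F]_r) (B : 'M[F]_s) :
  char_poly (block_mx A 0 0 B) = char_poly A * char_poly B.
Proof. by rewrite /char_poly char_block_diag_mx det_ublock. Qed.

Lemma char_poly_simmx m k (P : 'M[F]_(m, k)) (A : 'M_k) (B : 'M_m) :
  m = k -> row_full P -> P *m A = B *m P -> char_poly B = char_poly A.
Proof.
move=> mk; subst m; rewrite row_full_unit => Pu PA.
have -> : B = P *m A *m invmx P by rewrite PA -mulmxA mulmxV ?mulmx1.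
rewrite /char_poly; have -> : char_poly_mx (P *m A *m invmx P) =
    map_mx polyC P *m char_poly_mx A *m map_mx polyC (invmx P).
  rewrite /char_poly_mx mulmxBr mulmxBl; congr (_ - _); last by rewrite !map_mxM.
  by rewrite mul_mx_scalar -scalemxAl -map_mxM mulmxV // map_mx1 scalemx1.
rewrite !det_mulmx !det_map_mx mulrAC -rmorphM -det_mulmx mulmxV //.
by rewrite det1 rmorph1 mul1r.
Qed.

Lemma dvdp_char_poly_exp k (A : 'M[F]_k.+1) f :
  horner_mx A f = 0 -> char_poly A %| f ^+ k.+1.
Proof.
move=> Af; have [phi [[phiV phiK phiVK] phiZ phiC _]] := mx_poly_ring_isom F k.
have [Q EQ] : exists Q, map_poly scalar_mx f = Q * ('X - A%:P).
  by apply/factor_theorem; rewrite /root -Af.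
have E : f%:M = phiV Q *m char_poly_mx A.
  apply: (can_inj phiK); rewrite mulmxE rmorphM /= phiVK phiZ EQ.
  by rewrite /char_poly_mx rmorphB /= phiC phiZ map_polyX.
by apply/dvdpP; exists (\det (phiV Q)); rewrite -det_scalar E det_mulmx.
Qed.

Lemma char_poly_dvdp_coprime k (A : 'M[F]_k.+1) f g :
  horner_mx A f = 0 -> coprimep f g -> char_poly A %| f * g -> char_poly A %| f.
Proof.
move=> Af fg; rewrite Gauss_dvdpl //.
exact: coprimep_dvdr (dvdp_char_poly_exp Af) (coprimep_expl _ fg).
Qed.

Section CoprimeSplitting.
Variables (n : nat) (X : 'M[F]_n.+1).

Lemma char_poly_conjmx_dvdp r (V : 'M[F]_(r, n.+1)) f g :
  row_free V -> stablemx V X -> V *m horner_mx X f = 0 -> coprimep f g ->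
  char_poly (conjmx V X) %| f * g -> char_poly (conjmx V X) %| f.
Proof.
case: r V => [|r] V Vfree VX Vf fg.
  by rewrite /char_poly det_mx00 => _; apply: dvd1p.
by apply: char_poly_dvdp_coprime fg; rewrite horner_mx_conj // /conjmx Vf mul0mx.
Qed.

Local Notation restrict V := (conjmx (row_base V) X).

Lemma rank_kermxpoly_sum p q : p * q = char_poly X -> coprimep p q ->
  (\rank (kermxpoly X p) + \rank (kermxpoly X q))%N = n.+1.
Proof.
move=> pq_char pq_coprime; rewrite -mxrank_disjoint_sum ?mxdirect_kermxpoly //.
by rewrite -(kermxpolyM X pq_coprime) pq_char /kermxpoly Cayley_Hamilton kermx0 mxrank1.
Qed.

Lemma char_poly_kermxpoly_split p q : p * q = char_poly X -> coprimep p q ->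
  char_poly X = char_poly (restrict (kermxpoly X p)) * char_poly (restrict (kermxpoly X q)).
Proof.
move=> pq_char pq_coprime.
have conj_base (W : 'M_n.+1) : stablemx W X -> row_base W *m X = restrict W *m row_base W.
  by move=> WX; rewrite /conjmx mulmxKpV // stablemx_row_base.
rewrite -char_poly_block_diag; apply/esym.
apply: (char_poly_simmx (P := col_mx (row_base (kermxpoly X p)) (row_base (kermxpoly X q)))).
- exact: rank_kermxpoly_sum.
- rewrite /row_full -addsmxE (adds_eqmx (eq_row_base _) (eq_row_base _)).
  by rewrite mxrank_disjoint_sum ?mxdirect_kermxpoly ?rank_kermxpoly_sum.
by rewrite mul_col_mx mul_block_col !mul0mx addr0 add0r !conj_base // comm_mx_stable_kermxpoly.
Qed.

(* The restrictions of X to ker p(X) and ker q(X) have characteristic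
   polynomials dividing p and q, and their product is char_poly X. *)
Lemma rank_kermxpoly_coprime p q : p \is monic -> q \is monic ->
  p * q = char_poly X -> coprimep p q -> \rank (kermxpoly X p) = (size p).-1.
Proof.
move=> pm qm pq_char pq_coprime.
have restrict_dvdp f g : f * g = char_poly X -> coprimep f g ->
    char_poly (restrict (kermxpoly X f)) %| f.
  move=> fg_char fg; apply: char_poly_conjmx_dvdp (fg) _.
  - exact: row_base_free.
  - by rewrite stablemx_row_base comm_mx_stable_kermxpoly.
  - by apply/sub_kermxP; rewrite eq_row_base.
  by rewrite fg_char (char_poly_kermxpoly_split fg_char fg) dvdp_mulr.
have rank_le f g : f \is monic -> f * g = char_poly X -> coprimep f g ->
    (\rank (kermxpoly X f) <= (size f).-1)%N.
  move=> fm fg_char fg; have := dvdp_leq (monic_neq0 fm) (restrict_dvdp f g fg_char fg).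
  by rewrite size_char_poly => sz; rewrite -ltnS (leq_trans sz) ?leqSpred.
have sizes : ((size p).-1 + (size q).-1)%N = n.+1.
  have := size_mul (monic_neq0 pm) (monic_neq0 qm); rewrite pq_char size_char_poly.
  rewrite -(prednK (_ : 0 < size p)%N) ?size_poly_gt0 ?monic_neq0 //.
  by rewrite -(prednK (_ : 0 < size q)%N) ?size_poly_gt0 ?monic_neq0 // addSn addnS => -[].
have := rank_le p q pm pq_char pq_coprime.
have := rank_le q p qm; rewrite mulrC coprimep_sym => /(_ pq_char pq_coprime).
by move: (rank_kermxpoly_sum pq_char pq_coprime) sizes; lia.
Qed.

End CoprimeSplitting.

End CharPoly.

(** * Cyclic submodules and primary components *)

Section CyclicSubmodules.
Variables (F : finFieldType) (n : nat) (X : 'M[F]_n.+1).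
Implicit Types (w x : 'rV[F]_n.+1) (p : {poly F}).

Definition krylov w k : 'M[F]_(k, n.+1) := \matrix_(i < k) pact X w 'X^i.

Local Notation cyc w := (krylov w (size (ordX X w)).-1).

Lemma mul_krylov w k (y : 'rV_k) : y *m krylov w k = pact X w (rVpoly y).
Proof.
rewrite mulmx_sum_row [rVpoly y]poly_def /pact linear_sum /= mulmx_sumr.
by apply: eq_bigr => i _; rewrite valK /= rowK linearZ /= scalemxAr.
Qed.

Lemma in_cycE w x : in_cyc X w x <-> (x <= cyc w)%MS.
Proof.
split=> [[p ->]|/submxP[y ->]]; last by rewrite mul_krylov; apply: in_cyc_pact.
have sz : (size (p %% ordX X w)%R <= (size (ordX X w)).-1)%N.
  by rewrite -ltnS prednK ?ltn_modp ?ordX_neq0 // size_poly_gt0 ordX_neq0.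
by rewrite -pact_modp -(poly_rV_K sz) -mul_krylov submxMl.
Qed.

Lemma rank_cyc w : \rank (cyc w) = (size (ordX X w)).-1.
Proof.
apply/eqP; rewrite -/(row_free _) -kermx_eq0; apply/rowV0P => y /sub_kermxP.
rewrite mul_krylov => /eqP; rewrite -dvd_ordX => dy.
have [y0|ny0] := eqVneq (rVpoly y) 0; first by rewrite -[y]rVpolyK y0 linear0.
have := leq_trans (dvdp_leq ny0 dy) (size_poly _ _).
by rewrite -ltnS prednK ?ltnn // size_poly_gt0 ordX_neq0.
Qed.

Implicit Types (a b g h : {poly F}).
Local Notation c := (char_poly X).
Local Notation nu h := (oh h (char_poly X)).

Lemma char_poly_neq0 : c != 0.
Proof. exact: monic_neq0 (char_poly_monic X). Qed.

Lemma sub_kermxpoly x p : (x <= kermxpoly X p)%MS = (pact X x p == 0).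
Proof. exact/sub_kermxP/eqP. Qed.

Lemma cyc_sub_kermxpoly w p : ordX X w %| p -> (cyc w <= kermxpoly X p)%MS.
Proof.
move=> wp; apply/row_subP => i; have [q ->] := proj2 (in_cycE w _) (row_sub i _).
by rewrite sub_kermxpoly -pactM -dvd_ordX dvdp_mull.
Qed.

Lemma dvdp_exp_oh_gcd b h k a : monic_irr h -> a != 0 ->
  b %| h ^+ k -> b %| a -> b %| h ^+ oh h a.
Proof.
move=> hirr a0 bh ba; have h0 := monic_irr_neq0 hirr; have b0 := dvdpN0 ba a0.
apply: oh_leq_dvdp; rewrite ?expf_neq0 // => g girr; rewrite oh_exp //.
case: eqP => [->|/eqP gh]; first by apply: dvdp_oh_leq ba; rewrite ?monic_irr_size.
by have := dvdp_oh_leq (monic_irr_size girr) (expf_neq0 k h0) bh; rewrite oh_exp // (negPf gh).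
Qed.

Lemma primary_factor_coprime h : monic_irr h ->
  [/\ h ^+ nu h \is monic, c %/ h ^+ nu h \is monic,
      h ^+ nu h * (c %/ h ^+ nu h) = c & coprimep (h ^+ nu h) (c %/ h ^+ nu h)].
Proof.
move=> hirr; have hm : h ^+ nu h \is monic by rewrite monic_exp //; case: hirr.
have E : c %/ h ^+ nu h * h ^+ nu h = c by rewrite divpK // oh_dvdp ?monic_irr_size ?char_poly_neq0.
split=> //; first by rewrite -(monicMr _ hm) E char_poly_monic.
  by rewrite mulrC.
by rewrite coprimep_expl // coprimep_oh_cofactor ?char_poly_neq0.
Qed.

Lemma sub_Vh h x : monic_irr h -> (x <= Vh X h)%MS = (pact X x (h ^+ nu h) == 0).
Proof.
move=> hirr; rewrite [Vh X h]/Vh -/(kermxpoly X _) sub_kermxpoly -!dvd_ordX.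
apply/idP/idP => [xh|].
  by rewrite (dvdp_exp_oh_gcd hirr char_poly_neq0 xh) ?ordX_dvdp_char_poly.
move/dvdp_trans; apply; apply: dvdp_exp2l.
by rewrite -ltnS -(size_char_poly X) oh_lt_size ?monic_irr_size ?char_poly_neq0.
Qed.

Lemma Vh_eqmx h : monic_irr h -> (Vh X h :=: kermxpoly X (h ^+ nu h))%MS.
Proof.
move=> hirr; apply/eqmxP/andP; split; apply/row_subP => i.
  by rewrite sub_kermxpoly -sub_Vh ?row_sub.
by rewrite sub_Vh // -sub_kermxpoly row_sub.
Qed.

Lemma rank_Vh h : monic_irr h -> \rank (Vh X h) = ((size h).-1 * nu h)%N.
Proof.
move=> hirr; have [hm qm hq_char hq] := primary_factor_coprime hirr.
by rewrite (Vh_eqmx hirr) (rank_kermxpoly_coprime hm qm hq_char hq) size_exp.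
Qed.

Lemma Vh_sub_cyc w h : monic_irr h -> ordX X w = h ^+ nu h -> (Vh X h <= cyc w)%MS.
Proof.
move=> hirr wh; have sub : (cyc w <= Vh X h)%MS.
  by rewrite (Vh_eqmx hirr) cyc_sub_kermxpoly // wh.
by rewrite -(mxrank_leqif_sup sub) rank_cyc rank_Vh // wh size_exp.
Qed.

Lemma in_cyc_pact_div w g x : g \is monic -> g %| ordX X w ->
  in_cyc X w x -> ordX X x %| g -> in_cyc X (pact X w (ordX X w %/ g)) x.
Proof.
move=> gm gw [s ->]; rewrite dvd_ordX -pactM -dvd_ordX -{1}(divpK gw) dvdp_mul2r ?monic_neq0 //.
by move=> /dvdpP[t ->]; rewrite mulrC pactM; apply: in_cyc_pact.
Qed.

Lemma ordX_primary_part w h : monic_irr h ->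
  ordX X (pact X w (ordX X w %/ h ^+ oh h (ordX X w))) = h ^+ oh h (ordX X w).
Proof.
move=> hirr; set k := oh h _; have hm : h ^+ k \is monic by rewrite monic_exp //; case: hirr.
have E : ordX X w %/ h ^+ k * h ^+ k = ordX X w.
  by rewrite divpK // oh_dvdp ?monic_irr_size ?ordX_neq0.
have rm : ordX X w %/ h ^+ k \is monic by rewrite -(monicMr _ hm) E ordX_monic.
rewrite ordX_pact //; last by rewrite -{2}E dvdp_mulr ?dvdpp.
by rewrite -{1}E mulKp ?monic_neq0.
Qed.

Lemma saturated_fcyclic w h : monic_irr h -> oh h (ordX X w) = nu h ->
  exists w', [/\ in_cyc X w w', (w' <= Vh X h)%MS & forall x, (x <= Vh X h)%MS -> in_cyc X w' x].
Proof.
move=> hirr wh; have ow := ordX_primary_part w hirr; rewrite wh in ow.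
exists (pact X w (ordX X w %/ h ^+ nu h)); split; first exact: in_cyc_pact.
  by rewrite sub_Vh // -dvd_ordX ow.
by move=> x /submx_trans /(_ (Vh_sub_cyc hirr ow)) /in_cycE.
Qed.

(* The h-primary part of w generates a submodule of dimension deg h * o_h(ord w)
   that would contain V(h), of dimension deg h * nu(h). *)
Lemma Vh_in_cyc_oh w h : monic_irr h ->
  (forall x, (x <= Vh X h)%MS -> in_cyc X w x) -> oh h (ordX X w) = nu h.
Proof.
move=> hirr Vw; set k := oh h (ordX X w).
have k_le : (k <= nu h)%N.
  by apply: dvdp_oh_leq (ordX_dvdp_char_poly X w); rewrite ?monic_irr_size ?char_poly_neq0.
have hk : h ^+ k %| ordX X w by rewrite oh_dvdp ?monic_irr_size ?ordX_neq0.
have hm : h ^+ k \is monic by rewrite monic_exp //; case: hirr.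
have sub : (Vh X h <= cyc (pact X w (ordX X w %/ h ^+ k)))%MS.
  apply/row_subP => i; apply/in_cycE; have xV := row_sub i (Vh X h).
  apply: in_cyc_pact_div => //; first exact: Vw.
  apply: (dvdp_exp_oh_gcd (k := nu h)) (hirr) (ordX_neq0 X w) _ (ordX_in_cyc (Vw _ xV)).
  by rewrite dvd_ordX -sub_Vh.
have := mxrankS sub; rewrite rank_Vh // rank_cyc ordX_primary_part // size_exp.
rewrite leq_pmul2l => [nu_le|]; first by apply/eqP; rewrite eqn_leq k_le.
by rewrite -subn1 subn_gt0 monic_irr_size.
Qed.

Lemma in_prim_sum0 a : in_prim_sum X a 0.
Proof. by exists [::]; rewrite big_nil. Qed.

Lemma in_prim_sumD a x y : in_prim_sum X a x -> in_prim_sum X a y -> in_prim_sum X a (x + y).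
Proof.
move=> [s [sa ->]] [t [ta ->]]; exists (s ++ t); rewrite big_cat; split=> // hy.
by rewrite mem_cat => /orP[/sa|/ta].
Qed.

Lemma in_prim_sum_Vh a h x : monic_irr h -> h %| a -> (x <= Vh X h)%MS -> in_prim_sum X a x.
Proof.
by move=> hirr ha xV; exists [:: (h, x)]; rewrite big_seq1; split=> // hy /[!inE] /eqP->.
Qed.

Lemma in_prim_sum_dvdp a b x : a %| b -> in_prim_sum X a x -> in_prim_sum X b x.
Proof.
move=> ab [s [sa ->]]; exists s; split=> // hy /sa [hirr [ha hV]].
by split=> //; split=> //; apply: dvdp_trans ab.
Qed.

Lemma in_prim_sum_ann a x : a \is monic -> a %| c -> pact X x a = 0 -> in_prim_sum X a x.
Proof.
elim: {a}(size a) {-2}a (leqnn (size a)) x => [|k IHk] a ak x am ac xa.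
  by move: ak; rewrite leqn0 size_poly_eq0 (negPf (monic_neq0 am)).
have [a1|a_gt1] := leqP (size a) 1.
  by move: xa; rewrite (monic_size_le1 am a1) pact1 => ->; apply: in_prim_sum0.
have [h hirr ha] := monic_irr_factor a_gt1; have h1 := monic_irr_size hirr.
set e := oh h a; set b := a %/ h ^+ e.
have hm : h ^+ e \is monic by rewrite monic_exp //; case: hirr.
have Ea : b * h ^+ e = a by rewrite divpK // oh_dvdp ?monic_neq0.
have bm : b \is monic by rewrite -(monicMr _ hm) Ea.
have ba : b %| a by rewrite -Ea dvdp_mulr.
have [u1 [u2 Bezout]] : exists u1 u2 : {poly F}, u1 * h ^+ e + u2 * b = 1.
  have : coprimep (h ^+ e) b by rewrite coprimep_expl // coprimep_oh_cofactor ?monic_neq0.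
  by case/Bezout_eq1_coprimepP => -[v1 v2] /= E; exists v1, v2.
rewrite -[x](pact1 X) -Bezout pactD; apply: in_prim_sumD.
  apply: in_prim_sum_dvdp ba (IHk _ _ _ bm (dvdp_trans ba ac) _); last first.
    by rewrite -pactM (pact_dvdp xa) // -Ea mulrAC -mulrA dvdp_mull ?dvdpp.
  rewrite -ltnS (leq_trans _ ak) // -Ea size_monicM ?monic_neq0 //.
  have e_gt0 : (0 < e)%N by rewrite -dvdp_exp_oh ?monic_neq0 // expr1.
  by have := size_exp_gt e h1; move: e_gt0; lia.
apply: in_prim_sum_Vh (hirr) ha _.
rewrite sub_Vh // -pactM (pact_dvdp xa) // -Ea -mulrA dvdp_mull //.
by rewrite dvdp_mul2l ?monic_neq0 // dvdp_exp2l // dvdp_oh_leq ?char_poly_neq0.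
Qed.

Lemma in_cyc_in_prim_sum u x : in_cyc X u x -> in_prim_sum X (ordX X u) x.
Proof.
move=> ux; apply: in_prim_sum_ann (ordX_monic X u) (ordX_dvdp_char_poly X u) _.
by apply/eqP; rewrite -dvd_ordX ordX_in_cyc.
Qed.

Lemma in_prim_sum_in_cyc u a x : witness X u a -> in_prim_sum X a x -> in_cyc X u x.
Proof.
move=> ua [s [sa ->]]; elim: s sa => [|[h y] s IHs] sa; first by rewrite big_nil; apply: in_cyc0.
have [hirr [ha yV]] := sa _ (mem_head _ _).
rewrite big_cons; apply: in_cycD; first exact: ua hirr ha y yV.
by apply: IHs => hy hys; apply: sa; rewrite inE hys orbT.
Qed.

End CyclicSubmodules.

(** * Valuations along the loop *)

Section ValuationDynamics.
Local Open Scope nat_scope.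

(* One pass of the loop body seen at a single irreducible h, on the pair
   (o_h(a), o_h(d)): a' = a/d, e = gcd(a', d), d' = e * gcd(a'/e, e). *)
Definition val_step (s : nat * nat) : nat * nat :=
  let: (A, D) := s in let m := minn (A - D) D in (A - D, m + minn (A - D - m) m).

Lemma val_step_diag s : s.2 = s.1 -> val_step s = (0, 0).
Proof. by case: s => A D /= ->; rewrite subnn min0n. Qed.

Lemma val_step_fix0 A : val_step (A, 0) = (A, 0).
Proof. by rewrite /= subn0 minn0. Qed.

Lemma iter_val_step_fix0 k A : iter k val_step (A, 0) = (A, 0).
Proof. by elim: k => //= k ->; apply: val_step_fix0. Qed.

Lemma val_step_le s : (val_step s).2 <= (val_step s).1.
Proof. by case: s => A D /=; lia. Qed.

Lemma val_step_eq0 s : s.2 <= s.1 -> (val_step s).1 = 0 -> s.2 = s.1.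
Proof. by case: s => A D /=; lia. Qed.

Lemma val_step_pos s : (0 < s.1 -> 0 < s.2) -> (0 < (val_step s).1 -> 0 < (val_step s).2).
Proof. by case: s => A D /=; lia. Qed.

Lemma val_step_cases s : let s' := val_step s in
  s'.2 = s'.1 \/ [/\ s'.1 + s'.2 = s.1 + s.2, s'.2 = s.2.*2 & s'.2 < s'.1].
Proof. by case: s => A D /=; case: (leqP (A - D) D.*2) => ?; [left|right; split]; lia. Qed.

(* Until the two components meet, their sum is invariant and the second one
   doubles; this cannot go on for more than log2 N steps. *)
Lemma iter_val_step_vanish N A D : A + D <= N -> 0 < D <= A ->
  iter (trunc_log 2 N).+1 val_step (A, D) = (0, 0).
Proof.
move=> ADN /andP[D_gt0 DA]; set L := trunc_log 2 N.
have doubling k : let s := iter k val_step (A, D) in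
    s.2 = s.1 \/ [/\ s.1 + s.2 = A + D, 2 ^ k * D <= s.2 & s.2 < s.1].
  elim: k => [|k IHk]; first by case: (ltngtP D A) DA => //= *; [right; split|left]; rewrite ?mul1n.
  rewrite iterS; case: IHk => [diag|[sum low lt]].
    by left; rewrite val_step_diag.
  case: (val_step_cases (iter k val_step (A, D))) => [|[sum' D2 lt']]; [by left|right; split=> //].
  - by rewrite sum' sum.
  - by rewrite D2 expnS -mulnA -muln2 mulnC leq_mul2r low orbT.
have [diag|[sum low lt]] := doubling L; last first.
  have := trunc_log_ltn N (isT : 1 < 2); rewrite -/L expnS; move: D_gt0 low lt sum ADN.
  by set P := 2 ^ L; set s := iter L _ _; nia.
by rewrite iterS val_step_diag.
Qed.

End ValuationDynamics.

(** * The procedure *)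

Section Procedure.
Variables (F : finFieldType) (n : nat) (X : 'M[F]_n.+1) (v : 'rV[F]_n.+1).
Local Notation c := (char_poly X).
Local Notation a0 := (ordX X v).
Local Notation nu h := (oh h (char_poly X)).

(* The loop variables (u, g, a, d) after k passes through the loop body, at
   which point the loop condition has been tested k.+1 times. *)
Record isf_state := IsfState {
  st_u : 'rV[F]_n.+1; st_g : {poly F}; st_a : {poly F}; st_d : {poly F} }.

Definition isf_next s :=
  let g := st_g s * st_d s in let a := st_a s %/ st_d s in let e := mgcd a (st_d s) in
  IsfState (pact X v g) g a (e * mgcd (a %/ e) e).

Definition isf_state_at k := iter k isf_next (IsfState v 1 a0 (mgcd a0 (c %/ a0))).

Definition isf_halts s := (st_d s == 1) || (st_d s == st_a s).

Definition isf_return k : outcome F n :=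
  let s := isf_state_at k in
  if st_d s == 1 then RetTrue (st_u s) (st_a s) k.+1 else RetFalse F n k.+1.

Lemma isf_loopE fuel k m : (k <= m < k + fuel)%N -> isf_halts (isf_state_at m) ->
  (forall j, (k <= j < m)%N -> ~~ isf_halts (isf_state_at j)) ->
  let s := isf_state_at k in
  isf_loop X v fuel k.+1 (st_u s) (st_g s) (st_a s) (st_d s) = isf_return m.
Proof.
elim: fuel k => [|fuel IHfuel] k /andP[km mk] halt_m before /=.
  by rewrite addn0 ltnNge km in mk.
have [lt_km|] := ltnP k m; last first.
  move=> mk'; have -> : k = m by apply/eqP; rewrite eqn_leq km mk'.
  by rewrite /isf_return; move: halt_m; rewrite /isf_halts; case: eqP => //= _ ->.
have := before k; rewrite leqnn lt_km /isf_halts negb_or => /(_ isT) /andP[/negPf-> /negPf->].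
apply: (IHfuel k.+1) => [|//|j /andP[kj jm]]; first by rewrite lt_km addSnnS.
by apply: before; rewrite jm ltnW.
Qed.

Lemma isf_state_inv k : let s := isf_state_at k in
  [/\ st_u s = pact X v (st_g s), st_g s * st_a s = a0,
      st_a s \is monic, st_d s \is monic & st_d s %| st_a s].
Proof.
elim: k => [|k]; first by rewrite /= pact1 mul1r ordX_monic mgcd_monic ?mgcd_dvdl ?ordX_neq0.
rewrite [isf_state_at k.+1]iterS -/(isf_state_at k).
case: (isf_state_at k) => u g a d /= [_ ga am dm da].
set a' := a %/ d; set e := mgcd a' d.
have Ea : a' * d = a by rewrite divpK.
have a'm : a' \is monic by rewrite -(monicMr _ dm) Ea.
have em : e \is monic by rewrite mgcd_monic ?monic_neq0.
have Ea' : a' %/ e * e = a' by rewrite divpK // mgcd_dvdl ?monic_neq0.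
have a''m : a' %/ e \is monic by rewrite -(monicMr _ em) Ea'.
split=> //; first by rewrite -mulrA [d * _]mulrC Ea.
  by rewrite monicMl // mgcd_monic ?monic_neq0.
by rewrite -{2}Ea' mulrC dvdp_mul2r ?monic_neq0 // mgcd_dvdl ?monic_neq0.
Qed.

Lemma oh_isf_state k h : monic_irr h ->
  let s := iter k val_step (oh h a0, minn (oh h a0) (nu h - oh h a0)) in
  oh h (st_a (isf_state_at k)) = s.1 /\ oh h (st_d (isf_state_at k)) = s.2.
Proof.
move=> hirr; have h1 := monic_irr_size hirr.
have c0 := char_poly_neq0 X; have a00 := ordX_neq0 X v.
suff -> : iter k val_step (oh h a0, minn (oh h a0) (nu h - oh h a0)) =
  (oh h (st_a (isf_state_at k)), oh h (st_d (isf_state_at k))) by [].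
elim: k => [|k IHk] /=.
  have ca0 : c %/ a0 != 0.
    by apply: contraNneq c0 => e; rewrite -(divpK (ordX_dvdp_char_poly X v)) e mul0r.
  by rewrite oh_mgcd // oh_divp // ordX_dvdp_char_poly.
rewrite IHk -/(isf_state_at k); have [_ _ am dm da] := isf_state_inv k.
move: am dm da; case: (isf_state_at k) => u g a d /= am dm da; have d0 := monic_neq0 dm.
have a'0 : a %/ d != 0.
  by apply: contraNneq (monic_neq0 am) => e; rewrite -(divpK da) e mul0r.
have e0 : mgcd (a %/ d) d != 0 by rewrite monic_neq0 ?mgcd_monic.
have a''0 : a %/ d %/ mgcd (a %/ d) d != 0.
  by apply: contraNneq (a'0) => e; rewrite -(divpK (mgcd_dvdl d a'0)) e mul0r.
rewrite ohM ?monic_neq0 ?mgcd_monic // !oh_mgcd //.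
by rewrite (oh_divp hirr a'0 (mgcd_dvdl d a'0)) oh_mgcd // oh_divp ?monic_neq0.
Qed.

Definition saturated h := (0 < oh h a0)%N && (oh h a0 == nu h).

Lemma saturatedP h : monic_irr h ->
  saturated h <-> h %| c /\ (forall x, (x <= Vh X h)%MS -> in_cyc X v x).
Proof.
move=> hirr; have h1 := monic_irr_size hirr; have c0 := char_poly_neq0 X.
split=> [/andP[a_gt0 /eqP sat]|[hc Vv]].
  split; first by rewrite -(expr1 h) dvdp_exp_oh // -sat.
  have [w' [vw' _ Vw']] := saturated_fcyclic hirr sat.
  by move=> x /Vw'; apply: in_cyc_trans vw'.
have sat := Vh_in_cyc_oh hirr Vv.
by rewrite /saturated sat eqxx andbT -dvdp_exp_oh // expr1.
Qed.

Lemma oh_ordX_le_nu h : monic_irr h -> (oh h a0 <= nu h)%N.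
Proof.
move=> hirr; apply: dvdp_oh_leq (ordX_dvdp_char_poly X v).
  exact: monic_irr_size.
exact: char_poly_neq0.
Qed.

Lemma oh_isf_state_saturated k h : monic_irr h -> saturated h ->
  oh h (st_a (isf_state_at k)) = nu h /\ oh h (st_d (isf_state_at k)) = 0%N.
Proof.
move=> hirr /andP[_ /eqP sat]; have [-> ->] := oh_isf_state k hirr.
by rewrite sat subnn minn0 iter_val_step_fix0.
Qed.

Lemma oh_isf_state_unsaturated k h : monic_irr h -> ~~ saturated h ->
  (oh h (st_d (isf_state_at k)) <= oh h (st_a (isf_state_at k)))%N /\
  (0 < oh h (st_a (isf_state_at k)) -> 0 < oh h (st_d (isf_state_at k)))%N.
Proof.
move=> hirr unsat; have := oh_ordX_le_nu hirr; have [-> ->] := oh_isf_state k hirr.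
elim: k => [|k IHk] a_le /=.
  by split=> [|a_gt0]; [rewrite geq_minl | move: unsat a_le; rewrite /saturated a_gt0 /=; lia].
by split; [apply: val_step_le | apply: val_step_pos; case: (IHk a_le)].
Qed.

Lemma isf_halts_bound : isf_halts (isf_state_at (trunc_log 2 n.+1).+1).
Proof.
have [_ _ _ dm _] := isf_state_inv (trunc_log 2 n.+1).+1.
apply/orP; left; apply/eqP/monic_eq1_oh => // h hirr.
have [sat|unsat] := boolP (saturated h).
  by case: (oh_isf_state_saturated (trunc_log 2 n.+1).+1 hirr sat).
have a_le := oh_ordX_le_nu hirr.
have nu_le : (nu h <= n.+1)%N.
  by rewrite -ltnS -(size_char_poly X) oh_lt_size ?monic_irr_size ?char_poly_neq0.
have [_ ->] := oh_isf_state (trunc_log 2 n.+1).+1 hirr.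
have [a0h|a_gt0] := posnP (oh h a0); first by rewrite a0h min0n iter_val_step_fix0.
rewrite (@iter_val_step_vanish n.+1) //; first by move: a_le nu_le; lia.
by move: unsat a_le; rewrite /saturated a_gt0 geq_minl andbT /=; lia.
Qed.

Lemma isf_halts_saturated k h : monic_irr h -> saturated h ->
  isf_halts (isf_state_at k) -> st_d (isf_state_at k) = 1.
Proof.
move=> hirr sat /orP[/eqP //|/eqP da]; have [a_nu d_0] := oh_isf_state_saturated k hirr sat.
by case/andP: sat => + /eqP sat; rewrite sat -a_nu -da d_0.
Qed.

Lemma isf_first_halt_unsaturated m : v != 0 -> (forall h, monic_irr h -> ~~ saturated h) ->
  (forall j, (j < m)%N -> ~~ isf_halts (isf_state_at j)) -> st_d (isf_state_at m) != 1.
Proof.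
move=> v0 unsat before; apply/eqP => d1.
have a_0 h : monic_irr h -> oh h (st_a (isf_state_at m)) = 0%N.
  move=> hirr; have [_ pos] := oh_isf_state_unsaturated m hirr (unsat h hirr).
  by apply/eqP; rewrite -leqn0 leqNgt; apply/negP => /pos; rewrite d1 oh1.
case: m before d1 a_0 => [|k] before d1 a_0.
  by move: v0; rewrite -(pact1 X v) -(pact_ordX X v) (monic_eq1_oh (ordX_monic X v)).2 ?pact1 ?eqxx.
have [_ _ am dm _] := isf_state_inv k.
have /negP[] := before k (ltnSn k); apply/orP; right; apply/eqP.
apply: monic_oh_inj => // h hirr; have [le _] := oh_isf_state_unsaturated k hirr (unsat h hirr).
have := a_0 h hirr; have [-> _] := oh_isf_state k.+1 hirr; rewrite iterS.
by move: le; have [-> ->] := oh_isf_state k hirr; apply: val_step_eq0.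
Qed.

Lemma IsfWitnessE : v != 0 -> exists m, [/\ (m <= (trunc_log 2 n.+1).+1)%N,
  IsfWitness v X c = isf_return m &
  st_d (isf_state_at m) = 1 <-> exists2 h, monic_irr h & saturated h].
Proof.
move=> v0; have [m halt_m minimal] :=
  ex_minnP (ex_intro (fun k => isf_halts (isf_state_at k)) _ isf_halts_bound).
have before j : (j < m)%N -> ~~ isf_halts (isf_state_at j).
  by move=> jm; apply/negP => /minimal; rewrite leqNgt jm.
have m_le := minimal _ isf_halts_bound.
exists m; split=> //; first by apply: (isf_loopE (k := 0)); rewrite // /loop_bound addn2 ltnS.
split=> [d1|[h hirr sat]]; last exact: isf_halts_saturated hirr sat halt_m.
apply: NNPP => nosat; apply: (negP (isf_first_halt_unsaturated v0 _ before)); rewrite ?d1 //.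
by move=> h hirr; apply/negP => sat; apply: nosat; exists h.
Qed.

Lemma exists_saturatedP : (exists2 h, monic_irr h & saturated h) <->
  (exists a, a \is monic /\ (1 < size a)%N /\ a %| c /\ witness X v a).
Proof.
split=> [[h hirr /(saturatedP hirr)[hc Vv]]|[a [am [a_gt1 [ac va]]]]].
  exists h; split; first by case: hirr.
  split; first exact: monic_irr_size.
  by split=> // g girr /(monic_irr_dvdp_eq girr hirr) ->.
have [h hirr ha] := monic_irr_factor a_gt1.
by exists h => //; apply/saturatedP => //; split; [apply: dvdp_trans ac | apply: va].
Qed.

Lemma no_saturatedP : ~ (exists2 h, monic_irr h & saturated h) <->
  (forall h, monic_irr h -> h %| c -> fcyclic X h -> (oh h a0 < nu h)%N).
Proof.
split=> [nosat h hirr hc _|lt [h hirr sat]].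
  rewrite ltn_neqAle oh_ordX_le_nu // andbT; apply/eqP => sat; apply: nosat.
  exists h; rewrite // /saturated sat eqxx andbT.
  by rewrite -dvdp_exp_oh ?monic_irr_size ?char_poly_neq0 // expr1.
have [hc _] := (saturatedP hirr).1 sat; case/andP: sat => _ /eqP sat.
have [w' [_ w'V Vw']] := saturated_fcyclic hirr sat.
by have := lt h hirr hc (ex_intro _ w' (conj w'V Vw')); rewrite sat ltnn.
Qed.

Section Success.
Variable m : nat.
Hypothesis d1 : st_d (isf_state_at m) = 1.
Local Notation u := (st_u (isf_state_at m)).
Local Notation a := (st_a (isf_state_at m)).

Lemma oh_isf_state_success h : monic_irr h -> oh h a = if saturated h then nu h else 0%N.
Proof.
move=> hirr; case: ifPn => [sat|unsat]; first by case: (oh_isf_state_saturated m hirr sat).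
have [_ pos] := oh_isf_state_unsaturated m hirr unsat.
by apply/eqP; rewrite -leqn0 leqNgt; apply/negP => /pos; rewrite d1 oh1.
Qed.

Lemma isf_success_ordX : ordX X u = a.
Proof.
have [-> ga am _ _] := isf_state_inv m.
have gm : st_g (isf_state_at m) \is monic by rewrite -(monicMr _ am) ga ordX_monic.
by rewrite ordX_pact // -ga ?mulKp ?dvdp_mulr ?monic_neq0.
Qed.

Lemma isf_success_dvdp_char_poly : a %| c.
Proof. by rewrite -isf_success_ordX ordX_dvdp_char_poly. Qed.

Lemma isf_success_coprime : mgcd a (c %/ a) = 1.
Proof.
have [_ _ am _ _] := isf_state_inv m; have a_neq0 := monic_neq0 am.
have ca : c %/ a != 0.
  apply: contraNneq (char_poly_neq0 X) => e.
  by rewrite -(divpK isf_success_dvdp_char_poly) e mul0r.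
apply/monic_eq1_oh; rewrite ?mgcd_monic // => h hirr.
rewrite oh_mgcd ?monic_irr_size //.
rewrite oh_divp ?isf_success_dvdp_char_poly ?char_poly_neq0 //.
by rewrite oh_isf_state_success //; case: ifP; rewrite ?subnn ?minn0 ?min0n.
Qed.

Lemma isf_success_witness : witness X u a.
Proof.
move=> h hirr ha; have := oh_isf_state_success hirr.
case: ifP => [_ sat|_ a_0]; last first.
  have [_ _ am _ _] := isf_state_inv m.
  by move: ha; rewrite -(expr1 h) dvdp_exp_oh ?monic_irr_size ?monic_neq0 ?a_0.
have [w' [uw' _ Vw']] := saturated_fcyclic hirr (etrans (congr1 (oh h) isf_success_ordX) sat).
by move=> x /Vw'; apply: in_cyc_trans uw'.
Qed.

Lemma isf_success : (exists2 h, monic_irr h & saturated h) ->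
  [/\ u != 0, a = ordX X u, (1 < size a)%N & mgcd a (c %/ a) = 1] /\
  [/\ forall x, in_cyc X u x <-> in_prim_sum X a x,
      forall x, in_prim_sum X a x -> in_cyc X v x & witness X v a].
Proof.
move=> [h0 h0irr sat0]; have [u_def _ am _ _] := isf_state_inv m.
have vu : in_cyc X v u by rewrite u_def; apply: in_cyc_pact.
have a_neq1 : a != 1.
  have := oh_isf_state_success h0irr; rewrite sat0; case/andP: sat0 => a_gt0 /eqP <- E.
  by apply/eqP => a1; move: a_gt0; rewrite -E a1 oh1.
have uv x : in_cyc X u x -> in_cyc X v x := in_cyc_trans vu.
split; split=> //.
- by apply: contra_neq a_neq1 => u0; rewrite -isf_success_ordX u0 ordX0.
- by rewrite isf_success_ordX.
- by rewrite ltnNge; apply: contra a_neq1 => /(monic_size_le1 am)/eqP.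
- exact: isf_success_coprime.
- move=> x; split=> [/in_cyc_in_prim_sum|]; first by rewrite isf_success_ordX.
  exact: in_prim_sum_in_cyc isf_success_witness.
- by move=> x /(in_prim_sum_in_cyc isf_success_witness); apply: uv.
by move=> h hirr ha x /(isf_success_witness hirr ha); apply: uv.
Qed.

End Success.

End Procedure.

Theorem theorem7p1 (F : finFieldType) (n : nat) (X : 'M[F]_n.+1)
    (v : 'rV[F]_n.+1) :
  v != 0 ->
  let cX := char_poly X in
  let r := IsfWitness v X cX in
  [/\ (* (1) *)
      exists i, (1 <= i <= loop_bound n)%N /\
        (r = RetFalse F n i \/ exists u a, r = RetTrue u a i),
      (* (2) *)
      (exists u a i, r = RetTrue u a i) <->
        (exists a', a' \is monic /\ (1 < size a')%N /\ a' %| cX /\ witness X v a'),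
      (forall u a i, r = RetTrue u a i ->
         [/\ u != 0, a = ordX X u, (1 < size a)%N & mgcd a (cX %/ a) = 1] /\
         [/\ (forall x, in_cyc X u x <-> in_prim_sum X a x),
             (forall x, in_prim_sum X a x -> in_cyc X v x) &
             witness X v a]),
      (* (3) *)
      (exists i, r = RetFalse F n i) <->
        (forall h, monic_irr h -> h %| cX -> fcyclic X h ->
           (oh h (ordX X v) < oh h cX)%N)
    & uncyclic X -> exists i, r = RetFalse F n i].
Proof.
move=> v0 cX r; have [m [m_le rE sat_iff]] := IsfWitnessE X v0.
have i_le : (1 <= m.+1 <= loop_bound n)%N by rewrite /loop_bound addn2 ltnS.
rewrite /r rE /isf_return /= -/cX; case: eqP => [d1|d_neq1].
  have sat := sat_iff.1 d1; split=> //.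
  - by exists m.+1; split=> //; right; do 2 eexists.
  - by split=> _; [apply/exists_saturatedP | do 3 eexists].
  - by move=> u a i [<- <- _]; apply: isf_success.
  - by split=> [[i] //|cond]; case: ((no_saturatedP X v).2 cond sat).
  by move=> unc; case: ((no_saturatedP X v).2 _ sat) => h hirr hc /(unc h hirr hc).
have nosat : ~ exists2 h, monic_irr h & saturated X v h by move/sat_iff.
split=> //.
- by exists m.+1; split=> //; left.
- by split=> [[? [? [?]]] //|/exists_saturatedP].
- by split=> _; [apply/no_saturatedP | exists m.+1].
by exists m.+1.
Qed.
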